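(* Let $N\ge 3$ and let $A=(A_n)_{n\in\mathbb{Z}_{2N}}\in\mathbb{R}^{2N}$ satisfy $\sum_{l=1}^N A_{2l}<\sum_{l=1}^N A_{2l-1}$. Define $\bar A=(\bar A_n)_{n\in\mathbb{Z}_{2N}}$ by, for each $n\in\mathbb{Z}_N$ (indices modulo $2N$), $$\bar A_{2n}=\min\Big(A_{2n+1},\ A_{2n}-\min_{0\le k\le N-1}\sum_{l=1}^{k}\big(A_{2(n-l)+1}-A_{2(n-l)}\big)\Big),\qquad \bar A_{2n+1}=A_{2n+1}+A_{2n+2}-\bar A_{2n}$$ (the empty sum for $k=0$ being $0$). For $1\le k\le N$ let $$H_k(A)=\min_{\substack{1\le i_1\triangleleft i_2\triangleleft\cdots\triangleleft i_k\le 2N\\ (i_1,i_k)\neq(1,2N)}}\big(A_{i_1}+\cdots+A_{i_k}\big),$$ and $H_{N+1}(A)=\sum_{i=1}^{2N}A_i$. Then $H_k(\bar A)=H_k(A)$ for all $1\le k\le N+1$.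
   Context: For integers $i,j$, $i\triangleleft j$ means $i+1<j$. The minimum in $H_k$ runs over index tuples $1\le i_1<\dots<i_k\le 2N$ with consecutive indices differing by at least $2$, excluding tuples with $i_1=1$ and $i_k=2N$ simultaneously. The map $A\mapsto\bar A$ is the time evolution of the tropical periodic Toda lattice on the phase space $\{A\in\mathbb{R}^{2N}:\sum_{l}A_{2l}<\sum_l A_{2l-1}\}$. *)

From HB Require Import structures.
From mathcomp Require Import all_boot all_order all_algebra.
Set Implicit Arguments. Unset Strict Implicit. Unset Printing Implicit Defensive.
Import Order.TTheory GRing.Theory Num.Theory.
Local Open Scope ring_scope.

Section Toda.
Variable R : realFieldType.

(* Minimum of a (nonempty) finite list; the value on [::] is irrelevant
   (only used on nonempty lists). *)
Definition seqmin (s : seq R) : R :=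
  if s is x :: s' then foldr Num.min x s' else 0.

(* A point of R^{2N}: A : 'I_(2N) -> R, where the ordinal j stores A_j,
   indices being read modulo 2N (so A_{2N} is stored at j = 0). *)
Definition Aat (N : nat) (A : 'I_(2*N) -> R) (i : nat) : R :=
  if insub (i %% (2*N))%N is Some j then A j else 0.

(* S_k = sum_{l=1}^k (A_{2(n-l)+1} - A_{2(n-l)}), for 0 <= k <= N-1;
   n - l is represented as n + N - l (mod N) which is a positive nat here. *)
Definition Spart (N : nat) (A : 'I_(2*N) -> R) (n k : nat) : R :=
  \sum_(1 <= l < k.+1)
     (Aat A (2 * (n + N - l)).+1 - Aat A (2 * (n + N - l))).

Definition Abar_even (N : nat) (A : 'I_(2*N) -> R) (n : nat) : R :=
  Num.min (Aat A (2 * n).+1)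
          (Aat A (2 * n) - seqmin [seq Spart A n k | k <- iota 0 N]).

Definition Abar (N : nat) (A : 'I_(2*N) -> R) : 'I_(2*N) -> R :=
  fun j => let n := (val j)./2 in
    if odd (val j) then
      Aat A (2 * n).+1 + Aat A (2 * n).+2 - Abar_even A n
    else Abar_even A n.

(* admissible index tuples, stored 0-based: a position a stands for i = a+1.
   Conditions: i_1 <| i_2 <| ... <| i_k (i.e. i_{j}+1 < i_{j+1}) and
   (i_1, i_k) <> (1, 2N). *)
Definition admissible (N k : nat) (t : k.-tuple 'I_(2*N)) : bool :=
  let s := map val (tval t) in
  sorted (fun a b : nat => (a.+1 < b)%N) s &&
  ~~ ((head 0%N s == 0%N) && (last 0%N s == (2 * N).-1)).

Definition H (N : nat) (A : 'I_(2*N) -> R) (k : nat) : R :=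
  if k == N.+1 then \sum_(j < 2 * N) A j
  else seqmin [seq \sum_(j <- tval t) Aat A (val j).+1
              | t <- enum [pred t : k.-tuple 'I_(2*N) | admissible t]].

End Toda.

From HB Require Import structures.
From mathcomp Require Import all_boot all_order all_algebra.
From mathcomp Require Import lra zify.
Set Implicit Arguments. Unset Strict Implicit. Unset Printing Implicit Defensive.
Import Order.TTheory GRing.Theory Num.Theory.
Local Open Scope ring_scope.

(* Over the min-plus semiring R u {+oo} let L(c) = [[1, cX], [1, +oo]], a
   2x2 matrix of tropical polynomials in X.  The coefficient of X^k in an
   entry (i, j) of L(A_1) ... L(A_m) is the least total weight of k pairwise
   non-adjacent positions, read as a walk on two states from i to j; the
   trace closes the walk cyclically, so the coefficient of X^k in the trace
   of the monodromy L(A_1) ... L(A_2N) is exactly H_k(A).  Coefficients are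
   handled through their sublevel sets ("coefficient of X^k is <= r"), which
   turns minima into existence statements.
   The time evolution is the local exchange relation
     G(w_n) L(A_2n+1) L(A_2n+2) = L(Abar_2n) L(Abar_2n+1) G(w_n+1)
   with the gauge G(w) = [[1, wX], [+oo, 1]], w_n = A_2n - u_n and
   u_n = min_k S_k(n).  It rests on the recursion
   u_n+1 = min(0, A_2n+1 - A_2n + u_n), which holds because the hypothesis
   sum A_even < sum A_odd says S_N > 0.  As u is N-periodic, telescoping,
   cyclicity of the trace and gauge invariance of the trace show that A and
   Abar have the same monodromy trace, hence H_k(Abar) = H_k(A) for k <= N;
   H_N+1 is the total sum, preserved since Abar_2n + Abar_2n+1 =
   A_2n+1 + A_2n+2.
   The file develops in turn: products of matrices, selections of
   non-adjacent positions, tropical Lax matrices and their walks, H_k as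
   trace coefficients, and the Toda evolution. *)

Section MatrixProducts.
Variables (T : comPzSemiRingType) (n : nat).
Implicit Types F G K : nat -> 'M[T]_n.

Fixpoint mxprod F (m : nat) : 'M[T]_n :=
  if m is m'.+1 then mxprod F m' *m F m' else 1%:M.

Lemma mxprod_intertwine K F G m :
  (forall i, (i < m)%N -> K i *m F i = G i *m K i.+1) ->
  K 0%N *m mxprod F m = mxprod G m *m K m.
Proof.
elim: m => [|m IH] hKFG /=; first by rewrite mul1mx mulmx1.
rewrite mulmxA IH => [|i /ltnW]; last exact: hKFG.
by rewrite -mulmxA hKFG // mulmxA.
Qed.

Lemma mxprod_pairs F m :
  mxprod (fun i => F (2 * i)%N *m F (2 * i).+1) m = mxprod F (2 * m).
Proof.
by elim: m => [|m IH] //; rewrite mulnS /= IH mulmxA.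
Qed.

Lemma mxprodS F m : mxprod F m.+1 = F 0%N *m mxprod (fun i => F i.+1) m.
Proof.
elim: m => [|m IH]; first by rewrite /= mul1mx mulmx1.
change (mxprod F m.+1 *m F m.+1 =
        F 0%N *m (mxprod (fun i => F i.+1) m *m F m.+1)).
by rewrite IH mulmxA.
Qed.

Lemma mxtrace_mxprod_rot F m : F m = F 0%N ->
  \tr (mxprod F m) = \tr (mxprod (fun i => F i.+1) m).
Proof.
case: m => [|m] // hF.
by rewrite mxprodS mxtrace_mulC /= hF.
Qed.

End MatrixProducts.

Lemma ord2P (i : 'I_2) : i = 0 \/ i = 1.
Proof. by case: i => -[|[|//]] him; [left|right]; apply: val_inj. Qed.

Lemma mulmx2E (T : pzSemiRingType) (M M' : 'M[T]_2) i j :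
  (M *m M') i j = M i 0 * M' 0 j + M i 1 * M' 1 j.
Proof.
rewrite mxE !big_ord_recl big_ord0 addr0.
by have -> : lift ord0 ord0 = 1 :> 'I_2 by apply: val_inj.
Qed.

Lemma mxtrace2E (T : pzSemiRingType) (M : 'M[T]_2) : \tr M = M 0 0 + M 1 1.
Proof.
rewrite /mxtrace !big_ord_recl big_ord0 addr0.
by have -> : lift ord0 ord0 = 1 :> 'I_2 by apply: val_inj.
Qed.

Lemma minrEle (R : realDomainType) (x y : R) :
  Num.min x y = if x <= y then x else y.
Proof.
rewrite /Num.min /=; case: ltP => hxy; first by rewrite ltW.
by case: leP => // hyx; apply/le_anti; rewrite hxy hyx.
Qed.

Definition indep (m : nat) (b : nat -> bool) :=
  forall i, (i.+1 < m)%N -> ~~ (b i && b i.+1).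
Definition nsel (b : nat -> bool) (m : nat) : nat := count b (iota 0 m).
Definition wsel (V : nmodType) (g : nat -> V) (b : nat -> bool) (m : nat) : V :=
  \sum_(i <- iota 0 m | b i) g i.
Definition wstate (b : nat -> bool) (m : nat) (x : bool) : bool :=
  if m is m'.+1 then b m' else x.
Definition extend (b : nat -> bool) (m : nat) (v : bool) (i : nat) : bool :=
  if i == m then v else b i.

Lemma indepW m b : indep m.+1 b -> indep m b.
Proof. by move=> hb i /ltnW; apply: hb. Qed.

Lemma nselS b m : nsel b m.+1 = (nsel b m + b m)%N.
Proof. by rewrite /nsel -addn1 iotaD count_cat /= addn0. Qed.

Lemma wselS (V : nmodType) (g : nat -> V) b m :
  wsel g b m.+1 = wsel g b m + (if b m then g m else 0).
Proof.
rewrite /wsel -addn1 iotaD big_cat /= big_cons big_nil.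
by case: (b m); rewrite ?addr0.
Qed.

Lemma extend_below b m v i : (i < m)%N -> extend b m v i = b i.
Proof. by rewrite /extend => /ltn_eqF ->. Qed.

Lemma nsel_extend b m v : nsel (extend b m v) m.+1 = (nsel b m + v)%N.
Proof.
rewrite nselS {2}/extend eqxx; congr (_ + _)%N.
by apply: eq_in_count => i; rewrite mem_iota add0n => /extend_below.
Qed.

Lemma wsel_extend (V : nmodType) (g : nat -> V) b m v :
  wsel g (extend b m v) m.+1 = wsel g b m + (if v then g m else 0).
Proof.
rewrite wselS {2}/extend eqxx; congr (_ + _).
rewrite /wsel (big_mkcond (fun i => extend b m v i)).
rewrite (big_mkcond (fun i => b i)).
by apply: eq_big_seq => i; rewrite mem_iota add0n => /extend_below ->.
Qed.

Lemma indep_extend b m v x :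
  indep m b -> ~~ (wstate b m x && v) -> indep m.+1 (extend b m v).
Proof.
move=> hb hv i; rewrite ltnS leq_eqVlt => /orP [/eqP him|him].
  by move: hv; rewrite -him /= extend_below // /extend eqxx.
by rewrite !extend_below ?(ltnW him) //; apply: hb.
Qed.

Definition gap (a b : nat) : bool := (a.+1 < b)%N.

Lemma gap_trans : transitive gap.
Proof. by rewrite /gap => b a c; lia. Qed.

Lemma gap_irr : irreflexive gap.
Proof. by move=> a; rewrite /gap ltnNge leqnSn. Qed.

Lemma pairwise_gap_nonadj (s : seq nat) i :
  pairwise gap s -> ~~ ((i \in s) && (i.+1 \in s)).
Proof.
elim: s => //= a s IH /andP [has hs]; rewrite !inE.
apply/negP => /andP [/orP [/eqP ia|si] /orP [/eqP ia'|si']].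
- by move: ia'; rewrite ia; lia.
- by move: (allP has _ si'); rewrite -ia /gap ltnn.
- by move: (allP has _ si); rewrite -ia' /gap; lia.
- by move: (IH hs); rewrite si si'.
Qed.

Lemma pairwise_gap_head (s : seq nat) :
  pairwise gap s -> 0%N \in s -> head 0%N s = 0%N.
Proof.
case: s => //= a s /andP [has _]; rewrite inE => /orP [/eqP -> //|s0].
by have := allP has _ s0.
Qed.

Lemma pairwise_gap_last (s : seq nat) m : pairwise gap s ->
  all (fun x => x <= m)%N s -> m \in s -> last 0%N s = m.
Proof.
case/lastP: s => //= s z; rewrite last_rcons -cats1 pairwise_cat all_cat /=.
case/and3P=> hsz _ _ /andP [_] /andP [zm _].
rewrite mem_cat inE => /orP [ms|/eqP -> //].
by move: hsz; rewrite allrel1r => /allP /(_ _ ms); rewrite /gap; lia.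
Qed.

Lemma indep_sorted_gap m b : indep m b -> sorted gap (filter b (iota 0 m)).
Proof.
rewrite (sorted_pairwise gap_trans).
elim: m => [|m IH] hb //.
rewrite -addn1 iotaD filter_cat pairwise_cat (IH (indepW hb)) /=.
case bm: (b m) => /=; last by rewrite allrel0r.
rewrite andbT allrel1r; apply/allP => i.
rewrite mem_filter mem_iota leq0n ?add0n /= => /andP [bi im].
rewrite /gap ltn_neqAle im andbT.
by apply/eqP => ism; move: (hb i); rewrite bi ism bm ltnSn => /(_ isT).
Qed.

Lemma perm_filter_mem (s : seq nat) m : uniq s -> all (fun x => x < m)%N s ->
  perm_eq (filter (mem s) (iota 0 m)) s.
Proof.
move=> us sm; apply: uniq_perm => //.
  by apply: filter_uniq; apply: iota_uniq.
move=> x; rewrite mem_filter mem_iota add0n /=.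
by case xs: (x \in s) => //=; rewrite (allP sm x xs).
Qed.

Section TropicalLax.
Variable R : realFieldType.

(* The min-plus semiring R u {+oo}: [None] is +oo, the tropical zero;
   tropical addition is [min] and tropical multiplication is [+]. *)
Definition trop := option R.
HB.instance Definition _ := Choice.on trop.

Definition tadd (x y : trop) : trop :=
  match x, y with
  | None, _ => y | _, None => x | Some a, Some b => Some (Num.min a b) end.
Definition tmul (x y : trop) : trop :=
  match x, y with
  | Some a, Some b => Some (a + b) | _, _ => None end.

Lemma taddA : associative tadd.
Proof. by case=> [a|] [b|] [c|] //=; rewrite minA. Qed.
Lemma taddC : commutative tadd.
Proof. by case=> [a|] [b|] //=; rewrite minC. Qed.
Lemma tadd0 : left_id (None : trop) tadd.
Proof. by case. Qed.
HB.instance Definition _ := GRing.isNmodule.Build trop taddA taddC tadd0.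

Lemma tmulA : associative tmul.
Proof. by case=> [a|] [b|] [c|] //=; rewrite addrA. Qed.
Lemma tmulC : commutative tmul.
Proof. by case=> [a|] [b|] //=; rewrite addrC. Qed.
Lemma tmul1 : left_id (Some 0 : trop) tmul.
Proof. by case=> //= a; rewrite add0r. Qed.
Lemma tmulDl : left_distributive tmul tadd.
Proof. by case=> [a|] [b|] [c|] //=; rewrite addr_minl. Qed.
Lemma tmul0 : left_zero (None : trop) tmul.
Proof. by case. Qed.
Lemma tone_neq0 : (Some 0 : trop) != None. Proof. by []. Qed.
HB.instance Definition _ := GRing.Nmodule_isComNzSemiRing.Build trop
  tmulA tmulC tmul1 tmulDl tmul0 tone_neq0.

Notation tpoly := {poly trop}.

Definition tmono (c : R) : tpoly := (Some c : trop)%:P * 'X.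

Lemma tmonoD a b : tmono a + tmono b = tmono (Num.min a b).
Proof. by rewrite /tmono -mulrDl -polyCD. Qed.

Lemma tmonoM a b : tmono a * tmono b = (Some (a + b) : trop)%:P * 'X^2.
Proof. by rewrite /tmono mulrACA -polyCM expr2. Qed.

(* [coef_le p k r]: the coefficient of X^k in p is finite and at most r.
   These sublevel predicates turn tropical sums (minima) into
   disjunctions and tropical products by monomials into shifts. *)
Definition coef_le (p : tpoly) (k : nat) (r : R) : bool :=
  if p`_k is Some v then v <= r else false.

Lemma coef_leD p q k r : coef_le (p + q) k r = coef_le p k r || coef_le q k r.
Proof.
rewrite /coef_le coefD; case: (p`_k) => [a|]; case: (q`_k) => [b|] //=.
  by rewrite ge_min.
by rewrite orbF.
Qed.

Lemma coef_le_mulmono p c k r :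
  coef_le (p * tmono c) k r =
  if k is k'.+1 then coef_le p k' (r - c) else false.
Proof.
rewrite /coef_le /tmono mulrA coefMX; case: k => //= k.
by rewrite coefMC; case: (p`_k) => //= v; rewrite lerBrDr.
Qed.

Lemma coef_le1 k r : coef_le 1 k r = (k == 0)%N && (0 <= r).
Proof. by rewrite /coef_le coefE; case: k. Qed.

Lemma coef_le0 k r : coef_le 0 k r = false.
Proof. by rewrite /coef_le coefE. Qed.

(* Lax factor L(c) = [[1, cX], [1, +oo]] and gauge G(w) = [[1, wX], [+oo, 1]]
   (tropical 1 is [Some 0], tropical +oo is the zero polynomial). *)
Definition lax (c : R) : 'M[tpoly]_2 :=
  \matrix_(i, j) if val i == 0%N then (if val j == 0%N then 1 else tmono c)
                 else (if val j == 0%N then 1 else 0).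
Definition gauge (w : R) : 'M[tpoly]_2 :=
  \matrix_(i, j) if val i == 0%N then (if val j == 0%N then 1 else tmono w)
                 else (if val j == 0%N then 0 else 1).

Lemma exchange_min (b c w : R) :
  Num.min (c + (w - Num.min b w)) (b + c - Num.min b w) = c.
Proof. by rewrite !minrEle; case: (leP b w) => ?; case: leP; lra. Qed.

Lemma lax_exchange b c w :
  let m := Num.min b w in
  gauge w *m (lax b *m lax c) =
  (lax m *m lax (b + c - m)) *m gauge (c + (w - m)).
Proof.
move=> m; apply/matrixP => i j; rewrite !mulmx2E.
case: (ord2P i) => ->; case: (ord2P j) => -> /=; rewrite ?mulmx2E !mxE /=;
  rewrite !(mul0r, mulr0, mul1r, mulr1, addr0, add0r).
- by rewrite -addrA tmonoD.
- rewrite mulrDl mul1r -addrA [X in _ = _ + X]addrC addrA tmonoD exchange_min.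
  by rewrite !tmonoM /m; congr (_ + (Some _ : trop)%:P * _); lra.
- by [].
- by rewrite tmonoD exchange_min.
Qed.

Lemma mxtrace_gauge w (M M' : 'M[tpoly]_2) :
  gauge w *m M = M' *m gauge w -> \tr M = \tr M'.
Proof.
move/matrixP=> hMM'.
have h00 := hMM' 0 0; have h10 := hMM' 1 0; have h11 := hMM' 1 1.
rewrite !mulmx2E !mxE /= in h00 h10 h11.
rewrite !(mul0r, mulr0, mul1r, mulr1, addr0, add0r) in h00 h10 h11.
by rewrite !mxtrace2E -h00 h11 h10 -addrA [M' 1 0 * _]mulrC.
Qed.

(* The coefficient of X^k in an entry of L(g 0) ... L(g (m-1)) is read off
   from two-state walks, state [true] meaning "the last position was
   selected".  [lax_walk g m x y k r]: a walk of length m from state x to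
   state y selects k pairwise non-adjacent positions of weight at most r. *)
Definition lax_walk (g : nat -> R) (m : nat) (x y : bool) (k : nat) (r : R) :=
  exists b, [/\ indep m b, x -> ~~ b 0%N, wstate b m x = y,
                nsel b m = k & wsel g b m <= r].

Lemma lax_walk_skip g m x k r :
  lax_walk g m.+1 x false k r <->
  lax_walk g m x false k r \/ lax_walk g m x true k r.
Proof.
split=> [[b [hb hx /= bm hk hr]]|hw].
  have hw : lax_walk g m x (wstate b m x) k r.
    exists b; split=> //; first exact: indepW hb.
      by rewrite -hk nselS bm addn0.
    by move: hr; rewrite wselS bm addr0.
  by case: (wstate b m x) hw; [right|left].
have [y [b [hb hx _ hk hr]]] : exists y, lax_walk g m x y k r.
  by case: hw; eexists; eassumption.
exists (extend b m false); split.
- by apply: (indep_extend (x := x)); rewrite ?andbF.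
- by rewrite /extend; case: eqP => // _; apply: hx.
- by rewrite /= /extend eqxx.
- by rewrite nsel_extend addn0.
- by rewrite wsel_extend addr0.
Qed.

Lemma lax_walk_select g m x k r :
  lax_walk g m.+1 x true k r <->
  (if k is k'.+1 then lax_walk g m x false k' (r - g m) else False).
Proof.
split=> [[b [hb hx /= bm hk hr]]|].
  have hm : wstate b m x = false.
    case: m hb hx bm {hk hr} => [|m] hb hx bm /=.
      by case: x hx => // /(_ isT); rewrite bm.
    by apply/negbTE; have := hb m (ltnSn _); rewrite bm andbT.
  rewrite -hk nselS bm addn1; exists b; split=> //; first exact: indepW hb.
  by move: hr; rewrite wselS bm lerBrDr.
case: k => // k [b [hb hx hm hk hr]].
exists (extend b m true); split.
- by apply: (indep_extend (x := x)); rewrite ?hm.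
- rewrite /extend; case: eqP => [hm0|_]; last exact: hx.
  by move: hm; rewrite -hm0 /= => ->.
- by rewrite /= /extend eqxx.
- by rewrite nsel_extend addn1 hk.
- by rewrite wsel_extend -lerBrDr.
Qed.

Lemma lax_walk0 g x y k r :
  lax_walk g 0 x y k r <-> [/\ x = y, k = 0%N & 0 <= r].
Proof.
split=> [[b [_ _ <- <-]]|[-> -> hr]]; first by rewrite /wsel big_nil.
by exists (fun _ => false); split; rewrite // /wsel big_nil.
Qed.

Lemma coef_le_laxprod g m (i j : 'I_2) k r :
  coef_le (mxprod (fun n => lax (g n)) m i j) k r <->
  lax_walk g m (val i == 1%N) (val j == 1%N) k r.
Proof.
elim: m i j k r => [|m IH] i j k r.
  rewrite lax_walk0 /= mxE.
  case: (ord2P i) => ->; case: (ord2P j) => -> /=; rewrite ?coef_le1 ?coef_le0.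
  - by split; [move/andP=> [/eqP -> ->] | case=> _ -> ->].
  - by split => //; case.
  - by split => //; case.
  - by split; [move/andP=> [/eqP -> ->] | case=> _ -> ->].
change (coef_le ((mxprod (fun n => lax (g n)) m *m lax (g m)) i j) k r <->
   lax_walk g m.+1 (val i == 1%N) (val j == 1%N) k r).
rewrite mulmx2E !mxE; case: (ord2P j) => -> /=.
  rewrite !mulr1 coef_leD lax_walk_skip -(IH i 0) -(IH i 1).
  by split => /orP.
rewrite mulr0 addr0 coef_le_mulmono lax_walk_select.
by case: k => // k; exact: IH.
Qed.

End TropicalLax.

Section AdmissibleSelections.
Variables (N k : nat).
Hypothesis N_gt0 : (0 < N)%N.

Let M := (2 * N).-1.
Let M_eq : (2 * N)%N = M.+1. Proof. by rewrite prednK // muln_gt0. Qed.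

Lemma admissible_of_selection (V : nmodType) (g : nat -> V) b :
  indep (2 * N) b -> ~~ (b 0%N && b M) -> nsel b (2 * N) = k ->
  exists t : k.-tuple 'I_(2 * N),
    admissible t /\ \sum_(j <- t) g (val j) = wsel g b (2 * N).
Proof.
move=> hb hends; rewrite /nsel => hk; set s := filter b (iota 0 (2 * N)).
set t := [seq j <- enum 'I_(2 * N) | b (val j)].
have ts : map val t = s by rewrite /t /s -val_enum_ord filter_map.
have tk : size t == k by rewrite -(size_map val) ts /s size_filter hk.
exists (Tuple tk); split; last first.
  by rewrite /= -(big_map val xpredT) ts big_filter.
rewrite /admissible /= ts indep_sorted_gap //=.
apply/negP => /andP [/eqP s0 /eqP sM].
case es: s s0 sM => [|a s'] /= s0 sM; first by move: sM N_gt0; lia.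
have : a \in s by rewrite es mem_head.
have : last a s' \in s by rewrite es mem_last.
rewrite /s !mem_filter sM s0 => /andP [bM _] /andP [b0 _].
by move: hends; rewrite b0 bM.
Qed.

Lemma selection_of_admissible (V : nmodType) (g : nat -> V)
    (t : k.-tuple 'I_(2 * N)) : admissible t ->
  let b := mem (map val t) in
  [/\ indep (2 * N) b, ~~ (b 0%N && b M), nsel b (2 * N) = k
    & wsel g b (2 * N) = \sum_(j <- t) g (val j)].
Proof.
rewrite /admissible (sorted_pairwise gap_trans); set s := map val t.
case/andP=> hs hends.
have us : uniq s := pairwise_uniq gap_irr hs.
have sN : all (fun x => x < 2 * N)%N s.
  by apply/allP => _ /mapP [j _ ->]; exact: ltn_ord.
split.
- by move=> i _; apply: pairwise_gap_nonadj.
- apply/negP => /andP [s0 sM]; move: hends.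
  have sM' : all (fun x => x <= M)%N s.
    by apply/allP => x /(allP sN); rewrite M_eq ltnS.
  by rewrite (pairwise_gap_head hs s0) (pairwise_gap_last hs sM' sM) !eqxx.
- rewrite /nsel -size_filter (perm_size (perm_filter_mem us sN)).
  by rewrite size_map size_tuple.
- by rewrite /wsel -big_filter (perm_big _ (perm_filter_mem us sN)) big_map.
Qed.

(* Closed walks of the Lax monodromy are the cyclically independent
   selections: starting selected forbids selecting position 0. *)
Lemma closed_walk_selection (R : realFieldType) (g : nat -> R) r :
  lax_walk g (2 * N) false false k r \/ lax_walk g (2 * N) true true k r <->
  exists b, [/\ indep (2 * N) b, ~~ (b 0%N && b M),
                nsel b (2 * N) = k & wsel g b (2 * N) <= r].
Proof.
split.
  case=> -[] b [hb hx hy hk hr]; exists b; split => //.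
  - by move: hy; rewrite M_eq /= => ->; rewrite andbF.
  - by rewrite (negbTE (hx isT)).
case=> b [hb hends hk hr]; case bM: (b M); [right|left]; exists b; split => //.
- by move=> _; move: hends; rewrite bM andbT.
- by rewrite M_eq.
- by rewrite M_eq.
Qed.

Lemma admissible_walk (R : realFieldType) (g : nat -> R) r :
  lax_walk g (2 * N) false false k r \/ lax_walk g (2 * N) true true k r <->
  exists t : k.-tuple 'I_(2 * N), admissible t /\ \sum_(j <- t) g (val j) <= r.
Proof.
rewrite closed_walk_selection; split.
  case=> b [hb hends hk hr].
  have [t [ta tw]] := admissible_of_selection g hb hends hk.
  by exists t; rewrite tw.
case=> t [ta tr]; have [hb hends hk hw] := selection_of_admissible g ta.
by exists (mem (map val t)); split; rewrite ?hw.
Qed.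

Lemma coef_le_trace_admissible (R : realFieldType) (g : nat -> R) r :
  coef_le (\tr (mxprod (fun i => lax (g i)) (2 * N))) k r <->
  exists t : k.-tuple 'I_(2 * N), admissible t /\ \sum_(j <- t) g (val j) <= r.
Proof.
rewrite -admissible_walk mxtrace2E coef_leD.
rewrite -(coef_le_laxprod g _ 0 0) -(coef_le_laxprod g _ 1 1).
by split => /orP.
Qed.

End AdmissibleSelections.

Section SeqMin.
Variable R : realFieldType.
Implicit Types s : seq R.

Lemma seqmin_mem s : s != [::] -> seqmin s \in s.
Proof.
case: s => // x s _; elim: s => [|y s IH] /=; first exact: mem_head.
rewrite minrEle; case: ifP => _; first by rewrite !inE eqxx orbT.
by move: IH; rewrite !inE => /orP [] ->; rewrite ?orbT.
Qed.

Lemma seqmin_le s y : y \in s -> seqmin s <= y.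
Proof.
case: s => // x s; elim: s y => [|z s IH] y /=; first by rewrite inE => /eqP ->.
rewrite !inE ge_min => /or3P [/eqP ->|/eqP ->|ys].
- by rewrite (IH _ (mem_head _ _)) orbT.
- by rewrite lexx.
- by rewrite IH ?orbT // inE ys orbT.
Qed.

Lemma seqmin_eq s x : x \in s -> (forall y, y \in s -> x <= y) -> seqmin s = x.
Proof.
move=> xs xle; apply/le_anti; rewrite seqmin_le //=.
by apply: xle; apply: seqmin_mem; case: s xs.
Qed.

Lemma seqmin_le_has s1 s2 : s2 != [::] ->
  (forall r, has (fun x => x <= r) s2 -> has (fun x => x <= r) s1) ->
  seqmin s1 <= seqmin s2.
Proof.
move=> s2_neq0 hs12.
have /hasP [z zs1 zle] : has (fun x => x <= seqmin s2) s1.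
  by apply: hs12; apply/hasP; exists (seqmin s2); rewrite ?seqmin_mem.
exact: le_trans (seqmin_le zs1) zle.
Qed.

Lemma seqmin_has s1 s2 :
  (forall r, has (fun x => x <= r) s1 = has (fun x => x <= r) s2) ->
  seqmin s1 = seqmin s2.
Proof.
have [-> hs12 | s1_neq0 hs12] := eqVneq s1 [::].
  by case: s2 hs12 => // x s2 /(_ x); rewrite /= lexx.
have s2_neq0 : s2 != [::].
  apply: contraNneq s1_neq0 => s2_eq0.
  by case: s1 hs12 => // x s1 /(_ x); rewrite s2_eq0 /= lexx.
by apply/le_anti; rewrite !seqmin_le_has // => r; rewrite hs12.
Qed.

End SeqMin.

Definition monodromy (R : realFieldType) (N : nat) (B : 'I_(2 * N) -> R) :
    'M[{poly trop R}]_2 :=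
  mxprod (fun i => lax (Aat B i.+1)) (2 * N).

Lemma H_sublevel (R : realFieldType) (N k : nat) (B : 'I_(2 * N) -> R) (r : R) :
  (0 < N)%N ->
  has (fun x => x <= r)
    [seq \sum_(j <- tval t) Aat B (val j).+1
       | t <- enum [pred t : k.-tuple 'I_(2 * N) | admissible t]] =
  coef_le (\tr (monodromy B)) k r.
Proof.
move=> N_gt0; rewrite has_map; apply/hasP/idP.
  case=> t; rewrite mem_enum => ta tr.
  by apply/coef_le_trace_admissible => //; exists t.
case/coef_le_trace_admissible => // t [ta tr].
by exists t; rewrite ?mem_enum.
Qed.

Lemma sum_nat_shift (V : zmodType) (f : nat -> V) n : f 0%N = f n ->
  \sum_(0 <= l < n) f l.+1 = \sum_(0 <= l < n) f l.
Proof.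
move=> f0n; apply: (@addrI _ (f n)); rewrite -[in LHS]f0n -big_nat_recl //.
by rewrite big_nat_recr //= addrC.
Qed.

Lemma sum_nat_pairs (V : nmodType) (F : nat -> V) m :
  \sum_(0 <= i < 2 * m) F i = \sum_(0 <= n < m) (F (2 * n)%N + F (2 * n).+1).
Proof.
elim: m => [|m IH]; first by rewrite !big_geq.
by rewrite mulnS !big_nat_recr //= IH addrA.
Qed.

Section TodaEvolution.
Variables (R : realFieldType) (N : nat) (A : 'I_(2 * N) -> R).

Lemma Aat_per (B : 'I_(2 * N) -> R) i : Aat B (i + 2 * N) = Aat B i.
Proof. by rewrite /Aat modnDr. Qed.

Lemma Aat_ord (B : 'I_(2 * N) -> R) i (hi : (i < 2 * N)%N) :
  Aat B i = B (Ordinal hi).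
Proof.
rewrite /Aat modn_small //; case: insubP => [j _ ji|]; last by rewrite hi.
by congr B; apply: val_inj.
Qed.

Lemma Abar_even_at n : (n < N)%N -> Aat (Abar A) (2 * n) = Abar_even A n.
Proof.
move=> nN; have hi : (2 * n < 2 * N)%N by lia.
by rewrite (Aat_ord _ hi) /Abar /= oddM /= (_ : (2 * n)./2 = n) //; lia.
Qed.

Lemma Abar_odd_at n : (n < N)%N ->
  Aat (Abar A) (2 * n).+1 = Aat A (2 * n).+1 + Aat A (2 * n).+2 - Abar_even A n.
Proof.
move=> nN; have hi : ((2 * n).+1 < 2 * N)%N by lia.
by rewrite (Aat_ord _ hi) /Abar /= oddM /= (_ : uphalf (2 * n) = n) //; lia.
Qed.

Lemma sum_Abar : \sum_(j < 2 * N) Abar A j = \sum_(j < 2 * N) A j.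
Proof.
have sum_Aat (B : 'I_(2 * N) -> R) :
    \sum_(j < 2 * N) B j = \sum_(0 <= i < 2 * N) Aat B i.
  rewrite big_mkord; apply: eq_bigr => j _.
  by rewrite (Aat_ord _ (ltn_ord j)); congr B; apply: val_inj.
rewrite !sum_Aat sum_nat_pairs.
rewrite (@eq_big_nat _ _ _ 0 N _
  (fun n => Aat A (2 * n).+1 + Aat A (2 * n).+2)); last first.
  by move=> n /andP [_ nN]; rewrite Abar_even_at // Abar_odd_at // addrC subrK.
rewrite -(sum_nat_pairs (fun i => Aat A i.+1)) sum_nat_shift //.
by rewrite -(Aat_per A 0) add0n.
Qed.

Hypothesis N_gt0 : (0 < N)%N.

Definition Aeven n := Aat A (2 * n).
Definition Aodd n := Aat A (2 * n).+1.
Definition umin n := seqmin [seq Spart A n k | k <- iota 0 N].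
Definition wgauge n := Aeven n - umin n.

Lemma Spart0 n : Spart A n 0 = 0.
Proof. by rewrite /Spart big_geq. Qed.

Lemma SpartS n k : Spart A n.+1 k.+1 = (Aodd n - Aeven n) + Spart A n k.
Proof.
rewrite /Spart big_nat_recl //; congr (_ + _).
have -> : (2 * (n.+1 + N - 1) = 2 * n + 2 * N)%N by lia.
by rewrite -addSn !Aat_per.
Qed.

Lemma Spart_last n : Spart A n N = Spart A n N.-1 + (Aodd n - Aeven n).
Proof.
rewrite /Spart -{1}(prednK N_gt0) big_nat_recr /=; last by lia.
by congr (_ + _); have -> : (n + N - N.-1.+1 = n)%N by lia.
Qed.

Lemma Spart_full n : Spart A n N = Spart A 0 N.
Proof.
elim: n => // n IH.
have := SpartS n N.-1; rewrite prednK // => ->.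
by rewrite -IH Spart_last addrC.
Qed.

Lemma Spart_full_pos :
  \sum_(1 <= l < N.+1) Aat A (2 * l) < \sum_(1 <= l < N.+1) Aat A (2 * l).-1 ->
  0 < Spart A 0 N.
Proof.
have odd_sum :
    \sum_(1 <= l < N.+1) Aat A (2 * l).-1 = \sum_(0 <= l < N) Aodd l.
  rewrite big_add1 /=; apply: eq_bigr => l _.
  by rewrite /Aodd; congr (Aat A _); lia.
have even_sum :
    \sum_(1 <= l < N.+1) Aat A (2 * l) = \sum_(0 <= l < N) Aeven l.
  rewrite big_add1 /=; apply: sum_nat_shift.
  by rewrite /Aeven -(Aat_per A (2 * 0)).
have -> : Spart A 0 N = \sum_(0 <= l < N) (Aodd l - Aeven l).
  rewrite /Spart big_add1 /= big_nat_rev /=.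
  apply: eq_big_nat => l /andP [_ lN].
  by rewrite /Aodd /Aeven; congr (Aat A _ - Aat A _); lia.
by rewrite sumrB subr_gt0 -odd_sum -even_sum.
Qed.

Hypothesis Spart_gt0 : 0 < Spart A 0 N.

(* Positivity of S_N makes the minimum over k < N satisfy
   u_(n+1) = min(0, A_2n+1 - A_2n + u_n). *)
Lemma uminS n : umin n.+1 = Num.min 0 (Aodd n - Aeven n + umin n).
Proof.
have [j jN uj] : exists2 j, (j < N)%N & umin n = Spart A n j.
  have /mapP [j] : umin n \in [seq Spart A n k | k <- iota 0 N].
    by apply: seqmin_mem; rewrite -size_eq0 size_map size_iota -lt0n.
  by rewrite mem_iota add0n; exists j.
apply: seqmin_eq.
- rewrite minrEle; case: ifP => hle.
    by apply/mapP; exists 0%N; rewrite ?Spart0 // mem_iota add0n.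
  case: (ltnP j.+1 N) => jN'.
    by apply/mapP; exists j.+1; rewrite ?mem_iota ?SpartS ?uj.
  have jE : j = N.-1 by lia.
  move: hle; rewrite uj jE -SpartS prednK // Spart_full.
  by rewrite (ltW Spart_gt0).
- move=> _ /mapP [[|k] kN ->]; first by rewrite Spart0 ge_min lexx.
  rewrite SpartS ge_min lerD2l seqmin_le ?orbT //.
  by apply/mapP; exists k => //; move: kN; rewrite !mem_iota; lia.
Qed.

Lemma umin_per : umin N = umin 0.
Proof.
congr seqmin; apply/eq_in_map => k; rewrite mem_iota add0n => kN.
apply: eq_big_nat => l /andP [_ lk].
have -> : (2 * (N + N - l) = 2 * (0 + N - l) + 2 * N)%N by lia.
by rewrite -addSn !Aat_per.
Qed.

Lemma wgaugeS n :
  wgauge n.+1 = Aeven n.+1 + (wgauge n - Num.min (Aodd n) (wgauge n)).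
Proof.
by rewrite /wgauge uminS !minrEle; case: ifP => ?; case: ifP => ?; lra.
Qed.

Lemma lax_step n : (n < N)%N ->
  gauge (wgauge n) *m (lax (Aat A (2 * n).+1) *m lax (Aat A (2 * n).+2)) =
  (lax (Aat (Abar A) (2 * n)) *m lax (Aat (Abar A) (2 * n).+1)) *m
    gauge (wgauge n.+1).
Proof.
move=> nN; rewrite Abar_even_at // Abar_odd_at //.
have -> : Aat A (2 * n).+2 = Aeven n.+1 by rewrite /Aeven mulnS.
have -> : Abar_even A n = Num.min (Aodd n) (wgauge n) by [].
by rewrite wgaugeS; apply: lax_exchange.
Qed.

Lemma mxtrace_monodromy_Abar : \tr (monodromy (Abar A)) = \tr (monodromy A).
Proof.
have Abar_per : lax (Aat (Abar A) (2 * N)) = lax (Aat (Abar A) 0).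
  by rewrite -(Aat_per _ 0) add0n.
(* Rotate the Abar product so that it starts at Abar_0, then pair the
   factors on both sides and telescope the exchange relations. *)
rewrite /monodromy.
transitivity (\tr (mxprod (fun i => lax (Aat (Abar A) i)) (2 * N))).
  by rewrite (mxtrace_mxprod_rot Abar_per).
rewrite -!mxprod_pairs.
symmetry; apply: (@mxtrace_gauge _ (wgauge 0)).
have wgauge_per : wgauge N = wgauge 0.
  by rewrite /wgauge umin_per /Aeven -(Aat_per A (2 * 0)).
rewrite -{2}wgauge_per.
exact: (mxprod_intertwine (K := fun n => gauge (wgauge n))) lax_step.
Qed.

End TodaEvolution.

Theorem mainTheorem3 (R : realFieldType) (N : nat) (hN : (3 <= N)%N)
    (A : 'I_(2*N) -> R) :
  \sum_(1 <= l < N.+1) Aat A (2 * l) < \sum_(1 <= l < N.+1) Aat A (2 * l).-1 ->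
  forall k : nat, (1 <= k <= N.+1)%N -> H (Abar A) k = H A k.
Proof.
move=> hA k _; have N_gt0 : (0 < N)%N by lia.
rewrite /H; case: eqP => [_ | _]; first exact: sum_Abar.
apply: seqmin_has => r.
have Spart_gt0 := Spart_full_pos N_gt0 hA.
by rewrite !H_sublevel // (mxtrace_monodromy_Abar N_gt0 Spart_gt0).
Qed.
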